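(* Let $G=(V,E)$ be a finite undirected graph, let $k>2$ be an integer, let $C$ be a configuration, and let $s\in S(C)$ be locally legitimate in $C$ (as defined in the context). Then $\mathcal{B}(s,k-1)\cap S(C)=\{s\}$.
   Context: $\mathrm{dist}$ is the graph distance in $G$, $N(u)$ the neighbourhood of $u$, and $\mathcal{B}(s,r)=\{u\in V:\mathrm{dist}(u,s)\le r\}$. Let $m=\lfloor k/2\rfloor$. A configuration $C$ assigns to each node $u$ the values $d_u\in\{0,\dots,k-1\}$, $err_u\in\{0,1\}$, and for each $i\in\{1,\dots,m-1\}$ a clock value $c_{i,u}\in\mathbb{Z}/4\mathbb{Z}$ and an arrow $b_{i,u}\in\{\uparrow,\downarrow\}$. Let $S(C)=\{u\in V: d_u=0\}$. Clock arithmetic is in $\mathbb{Z}/4\mathbb{Z}$. Predicates on a node $u$: - $\mathrm{well\_defined}(u)$: $err_u=0$, $|d_u-d_v|\le 1$ for all $v\in N(u)$, and if $d_u>0$ then some $v\in N(u)$ has $d_v=d_u-1$. - $\mathrm{leader\_down}(u)$: if $d_u=0$ then $b_{i,u}=\downarrow$ for all $i\in\{1,\dots,m-1\}$. - $\mathrm{bc\_up}(u,i)$: for every $v\in N(u)$ with $d_v=d_u-1$, $(b_{i,u},b_{i,v},c_{i,v})\in\{(\uparrow,\uparrow,c_{i,u}),(\uparrow,\downarrow,c_{i,u}),(\uparrow,\downarrow,c_{i,u}+1),(\downarrow,\downarrow,c_{i,u})\}$. - $\mathrm{bc\_down}(u,i)$: for every $v\in N(u)$ with $d_v=d_u+1$,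 $(b_{i,u},b_{i,v},c_{i,v})\in\{(\uparrow,\uparrow,c_{i,u}),(\downarrow,\uparrow,c_{i,u}),(\downarrow,\uparrow,c_{i,u}-1),(\downarrow,\downarrow,c_{i,u})\}$. - $\mathrm{branch\_coherence}(u)$: either $d_u\ge m$, or ($\mathrm{bc\_up}(u,d_u)$ holds, and $\mathrm{bc\_up}(u,i)$ and $\mathrm{bc\_down}(u,i)$ hold for all $i\in\{d_u+1,\dots,m-1\}$). (For $d_u=0$ the condition $\mathrm{bc\_up}(u,0)$ is vacuous.) A node $s\in S(C)$ is locally legitimate in $C$ if (1) every node $u\in\mathcal{B}(s,m)$ satisfies $\mathrm{well\_defined}(u)$, $\mathrm{leader\_down}(u)$, $\mathrm{branch\_coherence}(u)$ and $d_u=\mathrm{dist}(u,s)$; and (2) every node $u\in\mathcal{B}(s,k-1)\setminus\mathcal{B}(s,m)$ satisfies $k-\mathrm{dist}(u,s)\le d_u\le\mathrm{dist}(u,s)$. *)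

From mathcomp Require Import all_boot all_order all_algebra.
Set Implicit Arguments. Unset Strict Implicit. Unset Printing Implicit Defensive.
Import GRing.Theory.

(* A finite undirected graph is a symmetric irreflexive relation e on a finType T
   (symmetry/irreflexivity are hypotheses of the theorem). *)

Fixpoint reach (T : finType) (e : rel T) (n : nat) (u v : T) : bool :=
  match n with
  | 0 => u == v
  | n'.+1 => reach e n' u v || [exists w, e u w && reach e n' w v]
  end.

(* graph distance (meaningful when v is reachable from u; then it is < #|T|) *)
Definition dist (T : finType) (e : rel T) (u v : T) : nat :=
  find (fun n => reach e n u v) (iota 0 #|T|).

Definition ball (T : finType) (e : rel T) (s : T) (r : nat) : {set T} :=
  [set u | reach e r u s].

(* A configuration: distance variable d, error bit err, and for each index i
   a clock c i u in Z/4Z and an arrow b i u (true = up, false = down).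
   Only indices i in {1,...,m-1} are ever read. *)
Record config (T : finType) := Config {
  cd : T -> nat;
  cerr : T -> bool;
  cc : nat -> T -> 'Z_4;
  cb : nat -> T -> bool
}.

Definition S_of (T : finType) (C : config T) : {set T} := [set u | cd C u == 0].

Section Preds.
Variables (T : finType) (e : rel T) (k : nat) (C : config T).
Local Notation m := (k./2).
Local Notation d := (cd C).

Definition well_defined (u : T) : Prop :=
  cerr C u = false /\
  (forall v, e u v -> d u <= (d v).+1 /\ d v <= (d u).+1) /\
  (0 < d u -> exists v, e u v /\ (d v).+1 = d u).

Definition leader_down (u : T) : Prop :=
  d u = 0 -> forall i, 1 <= i <= m - 1 -> cb C i u = false.

Definition bc_up (u : T) (i : nat) : Prop :=
  forall v, e u v -> (d v).+1 = d u ->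
    let bu := cb C i u in let bv := cb C i v in
    let cu := cc C i u in let cv := cc C i v in
    [|| [&& bu, bv & cv == cu],
        [&& bu, ~~ bv & cv == cu],
        [&& bu, ~~ bv & cv == (cu + 1)%R] |
        [&& ~~ bu, ~~ bv & cv == cu]].

Definition bc_down (u : T) (i : nat) : Prop :=
  forall v, e u v -> d v = (d u).+1 ->
    let bu := cb C i u in let bv := cb C i v in
    let cu := cc C i u in let cv := cc C i v in
    [|| [&& bu, bv & cv == cu],
        [&& ~~ bu, bv & cv == cu],
        [&& ~~ bu, bv & cv == (cu - 1)%R] |
        [&& ~~ bu, ~~ bv & cv == cu]].

Definition branch_coherence (u : T) : Prop :=
  m <= d u \/
  (bc_up u (d u) /\
   forall i, d u + 1 <= i <= m - 1 -> bc_up u i /\ bc_down u i).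

Definition locally_legitimate (s : T) : Prop :=
  s \in S_of C /\
  (forall u, u \in ball e s m ->
     [/\ well_defined u, leader_down u, branch_coherence u & d u = dist e u s]) /\
  (forall u, u \in ball e s (k - 1) -> u \notin ball e s m ->
     k - dist e u s <= d u <= dist e u s).
End Preds.

From mathcomp Require Import all_boot all_order all_algebra.
From mathcomp Require Import zify.
Set Implicit Arguments. Unset Strict Implicit.

(* A leader u in B(s, k-1) other than s is impossible: inside B(s, m) its
   distance variable is exact, so d_u = dist(u, s) = 0 forces u = s; outside
   B(s, m) legitimacy gives d_u >= k - dist(u, s) >= 1. *)

Section Distance.
Variables (T : finType) (e : rel T).

Lemma reach_refl n (u : T) : reach e n u u.
Proof. by elim: n => [|n IHn] /=; rewrite ?eqxx ?IHn. Qed.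

(* An unreachable target gets the junk distance #|T|. *)
Lemma dist_le_card (u v : T) : dist e u v <= #|T|.
Proof. by rewrite -[X in _ <= X](size_iota 0) find_size. Qed.

Lemma dist_le n (u v : T) : n < #|T| -> reach e n u v -> dist e u v <= n.
Proof.
move=> n_lt reach_n; rewrite leqNgt; apply/negP => /(before_find 0).
by rewrite nth_iota // add0n reach_n.
Qed.

Lemma dist_eq0 (u v : T) : dist e u v = 0 -> u = v.
Proof.
move=> d0; have card_gt0 : 0 < #|T| by apply/card_gt0P; exists u.
have has_reach : has (fun n => reach e n u v) (iota 0 #|T|).
  by rewrite has_find size_iota /dist in d0 *; rewrite d0.
by move: (nth_find 0 has_reach); rewrite -/(dist e u v) d0 nth_iota //= => /eqP.
Qed.

End Distance.

Theorem lemma5 (T : finType) (e : rel T) (k : nat) (C : config T) (s : T) :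
  symmetric e -> irreflexive e -> 2 < k ->
  (forall u, cd C u < k) ->
  locally_legitimate e k C s ->
  ball e s (k - 1) :&: S_of C = [set s].
Proof.
move=> _ _ k_gt2 _ [s_leader [inner outer]].
apply/setP => u; rewrite in_setI in_set1; apply/andP/eqP => [[u_near] | ->].
  rewrite inE => /eqP du0.
  have [u_inner | u_outer] := boolP (u \in ball e s k./2).
    have [_ _ _ du_dist] := inner u u_inner.
    by apply: (dist_eq0 (e := e)); rewrite -du_dist.
  have := outer u u_near u_outer; rewrite du0 leqn0 subn_eq0 => /andP [k_le _].
  have near_dist : dist e u s <= k - 1.
    apply: dist_le; last by rewrite inE in u_near.
    by have := dist_le_card e u s; lia.
  lia.
by split; rewrite // inE reach_refl.
Qed.
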